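(* Let $X$ be a locally compact Hausdorff space and $\sigma:X\to X$ a homeomorphism. Let $S\subset\{1,2,3,\dots\}$ be a non-empty (finite or infinite) set and $P_S=\{p\in\{1,2,3,\dots\}: p\text{ divides some }s\in S\}$. Then $$\bigcup_{p\in P_S}\mathrm{Per}_p(\sigma)^\circ\subset\bigcup_{s\in S}\mathrm{Fix}_s(\sigma)^\circ\subset\Big(\bigcup_{s\in S}\mathrm{Fix}_s(\sigma)\Big)^\circ\subset\overline{\bigcup_{p\in P_S}\mathrm{Per}_p(\sigma)^\circ},$$ $$\bigcup_{p\in P_S}\mathrm{Per}_p(\sigma)^\circ\subset\Big(\bigcup_{p\in P_S}\mathrm{Per}_p(\sigma)\Big)^\circ\subset\Big(\bigcup_{s\in S}\mathrm{Fix}_s(\sigma)\Big)^\circ,$$ and $$\overline{\Big(\bigcup_{p\in P_S}\mathrm{Per}_p(\sigma)\Big)^\circ}=\overline{\bigcup_{p\in P_S}\mathrm{Per}_p(\sigma)^\circ}=\overline{\bigcup_{s\in S}\mathrm{Fix}_s(\sigma)^\circ}=\overline{\Big(\bigcup_{s\in S}\mathrm{Fix}_s(\sigma)\Big)^\circ}.$$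
   Context: For $n\ge1$, $\mathrm{Fix}_n(\sigma)=\{x\in X:\sigma^nx=x\}$ and $\mathrm{Per}_p(\sigma)$ is the set of points of least period exactly $p$. A superscript $\circ$ denotes interior in $X$ and an overline denotes closure in $X$. *)

From HB Require Import structures.
From mathcomp Require Import all_boot all_order all_algebra.
From mathcomp Require Import all_classical all_reals all_analysis.
Set Implicit Arguments. Unset Strict Implicit. Unset Printing Implicit Defensive.
Local Open Scope classical_set_scope.

Definition Fix {X : Type} (sigma : X -> X) (n : nat) : set X :=
  [set x | iter n sigma x = x].

Definition Per {X : Type} (sigma : X -> X) (p : nat) : set X :=
  [set x | (0 < p)%N /\ iter p sigma x = x /\
           forall k, (0 < k)%N -> (k < p)%N -> iter k sigma x <> x].

Definition PS (S : set nat) : set nat :=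
  [set p | (0 < p)%N /\ exists2 s, S s & (p %| s)%N].

Definition homeomorphism {X : topologicalType} (sigma : X -> X) : Prop :=
  continuous sigma /\ exists tau : X -> X,
    continuous tau /\ cancel sigma tau /\ cancel tau sigma.

From HB Require Import structures.
From mathcomp Require Import all_boot all_order all_algebra.
From mathcomp Require Import all_classical all_reals all_analysis.

(* The inclusions A <= B, A <= D <= C and B <= C are immediate from Per_p <= Fix_s for p | s,
   so everything reduces to C <= closure A, i.e. that every non-empty open set U inside the
   union of the Fix_s meets A.  The Fix_s are closed, so by the Baire category theorem for
   locally compact Hausdorff spaces some Fix_s has interior meeting U; this gives a non-empty
   open V <= Fix_s.  Let q be the largest least period of a point of V: the points of V that
   are not fixed by any sigma^k with 0 < k < q form an open set, which is non-empty by the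
   choice of q and consists of points of least period q, a divisor of s. *)

Set Implicit Arguments.
Unset Strict Implicit.
Unset Printing Implicit Defensive.

Local Open Scope classical_set_scope.

Section periodic_points.
Variables (T : Type) (f : T -> T).

Lemma Fix_dvdn q s : (q %| s)%N -> Fix f q `<=` Fix f s.
Proof.
by move=> /dvdnP[k ->] x qx; rewrite /Fix /= iterM; elim: k => //= k ->.
Qed.

Lemma Per_sub_Fix q : Per f q `<=` Fix f q.
Proof. by move=> x [_ []]. Qed.

Lemma Per_dvdn q s x : Per f q x -> Fix f s x -> (q %| s)%N.
Proof.
move=> [q_gt0 [qx qmin]] sx; apply: contrapT => /negP qNs.
have sq_fix : iter (s %% q) f x = x.
  rewrite -[in RHS]sx [in RHS](divn_eq s q) addnC iterD.
  by rewrite (Fix_dvdn (dvdn_mull _ (dvdnn q)) qx).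
by apply: (qmin _ _ (ltn_pmod s q_gt0) sq_fix); rewrite lt0n.
Qed.

Lemma Fix_exists_Per s x : (0 < s)%N -> Fix f s x -> exists q, Per f q x.
Proof.
move=> s_gt0 sx.
have exP : exists k, [pred k | (0 < k)%N && `[< iter k f x = x >]] k.
  by exists s; rewrite /= s_gt0; apply/asboolP.
case: (ex_minnP exP) => q /andP[q_gt0 /asboolP qx] qmin.
exists q; split; [done | split=> // k k_gt0 kq kx].
by have := qmin k; rewrite /= k_gt0 => /(_ (asboolT kx)); rewrite leqNgt kq.
Qed.

End periodic_points.

Lemma closed_fixed_points (X : topologicalType) (f : X -> X) :
  hausdorff_space X -> continuous f -> closed [set x | f x = x].
Proof.
move=> hsX cf y cly; apply: hsX => A B Afy By.
have /cly[z [/= fz [Bz Afz]]] : nbhs y (B `&` f @^-1` A) by apply: filterI => //; exact: cf.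
by exists z; split => //; rewrite -fz.
Qed.

Lemma continuous_iter (X : topologicalType) (f : X -> X) n :
  continuous f -> continuous (iter n f).
Proof.
move=> cf; elim: n => [|n IH] x /=; first exact: cvg_id.
by apply: continuous_comp; [exact: IH | exact: cf].
Qed.

Lemma closed_Fix (X : topologicalType) (f : X -> X) n :
  hausdorff_space X -> continuous f -> closed (Fix f n).
Proof. by move=> hsX cf; apply: closed_fixed_points => //; exact: continuous_iter. Qed.

Lemma open_Fix_meets_Per_interior (X : topologicalType) (f : X -> X) s (V : set X) :
  hausdorff_space X -> continuous f -> (0 < s)%N ->
  open V -> V !=set0 -> V `<=` Fix f s ->
  exists2 q, (q %| s)%N & (V `&` (Per f q)°) !=set0.
Proof.
move=> hsX cf s_gt0 oV [x Vx] VFix.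
pose periodV := [pred q | `[< exists2 y, V y & Per f q y >]].
have exq : exists q, periodV q.
  by have [q xq] := Fix_exists_Per s_gt0 (VFix x Vx); exists q; apply/asboolP; exists x.
have q_le_s q : periodV q -> (q <= s)%N.
  by move=> /asboolP[y Vy qy]; exact: dvdn_leq s_gt0 (Per_dvdn qy (VFix y Vy)).
case: (ex_maxnP exq q_le_s) => q /asboolP[y Vy qy] qmax.
pose W := V `&` ~` \bigcup_(k in [set k | (0 < k < q)%N]) Fix f k.
have oW : open W.
  apply: openI => //; apply: closed_openC; apply: closed_bigcup => [|k _].
    by apply: (sub_finite_set _ (finite_II q)) => k /andP[].
  exact: closed_Fix.
have W_Per : W `<=` Per f q.
  move=> z [Vz Wz]; have [p zp] := Fix_exists_Per s_gt0 (VFix z Vz).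
  have p_le_q : (p <= q)%N by apply: qmax; apply/asboolP; exists z.
  case: (ltngtP p q) p_le_q => [pq _|//|<- //].
  by exfalso; apply: Wz; exists p; [case: zp => p_gt0 _; apply/andP | exact: Per_sub_Fix].
exists q; first exact: Per_dvdn qy (VFix y Vy).
have Wy : W y.
  by split=> // -[k /andP[k_gt0 kq]]; case: qy => _ [_ qmin]; exact: qmin.
by exists y; split => //; rewrite (open_subsetE _ oW) in W_Per; exact: W_Per.
Qed.

Section locally_compact_hausdorff.
Variable X : topologicalType.
Hypotheses (hsX : hausdorff_space X) (lcX : locally_compact [set: X]).

Lemma open_compact_subset (O : set X) :
  open O -> O !=set0 -> exists K, [/\ compact K, K° !=set0 & K `<=` O].
Proof.
move=> oO [x Ox].
have [U] := @lcX x I; rewrite withinET => Ux [cU _].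
have [N Nx NOU] := compact_regular hsX cU Ux (filterI (open_nbhs_nbhs (conj oO Ox)) Ux).
exists (closure N); split.
- by apply: subclosed_compact cU _; [exact: closed_closure | by move=> y /NOU[]].
- by exists x; apply: filterS Nx; exact: subset_closure.
- by move=> y /NOU[].
Qed.

Lemma nested_compact_bigcap_neq0 (K : nat -> set X) :
  (forall n, compact (K n)) -> (forall n, K n !=set0) ->
  (forall n, K n.+1 `<=` K n) -> exists x, forall n, K n x.
Proof.
move=> cK K_neq0 KS.
have K_le m n : (m <= n)%N -> K n `<=` K m.
  by move=> /subnK <-; elim: (n - m)%N => //= k IH z /KS /IH.
pose F := filter_from [set: nat] K.
have F_proper : ProperFilter F.
  apply: filter_from_proper => [|n _]; last exact: K_neq0.
  apply: filter_from_filter; first by exists 0%N.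
  by move=> i j _ _; exists (maxn i j) => // z Kz; split; apply: K_le Kz;
    [exact: leq_maxl | exact: leq_maxr].
have F_K0 : F (K 0%N) by exists 0%N.
have [x [_ clx]] := cK 0%N F F_proper F_K0.
exists x => n; apply: (compact_closed hsX (cK n)) => B Bx.
by apply: clx => //; exists n.
Qed.

Theorem locally_compact_Baire (U : set X) (P : set nat) (F : nat -> set X) :
  open U -> U !=set0 -> (forall n, P n -> closed (F n)) ->
  U `<=` \bigcup_(n in P) F n -> exists2 n, P n & (U `&` (F n)°) !=set0.
Proof.
move=> oU U0 cF UF; apply: contrapT => noint.
pose good K := [/\ compact K, K° !=set0 & K `<=` U].
have shrink (nK : nat * set X) : exists K', good nK.2 ->
    [/\ good K', K' `<=` nK.2 & P nK.1 -> K' `<=` ~` F nK.1].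
  case: nK => n K /=; have [Kgood|] := pselect (good K); last by exists set0.
  case: (Kgood) => cK [x Kx] KU.
  have [Pn|nPn] := pselect (P n); last by exists K => _; split=> // /nPn.
  have oKF : open (K° `\` F n).
    by apply: openI; [exact: open_interior | exact/closed_openC/cF].
  have KF0 : (K° `\` F n) !=set0.
    apply: contrapT => KF_empty.
    have KF : K° `<=` F n.
      by move=> z Kz; apply: contrapT => nFz; apply: KF_empty; exists z.
    rewrite (open_subsetE _ (@open_interior _ K)) in KF.
    apply: noint; exists n => //; exists x.
    by split; [exact: KU _ (interior_subset Kx) | exact: KF].
  have [K' [cK' iK' K'sub]] := open_compact_subset oKF KF0.
  exists K' => _; split => //; first split => //.
  - by move=> z /K'sub[/interior_subset/KU].
  - by move=> z /K'sub[/interior_subset].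
  - by move=> _ z /K'sub[].
have [g gP] := choice shrink.
have [K0 [cK0 iK0 K0U]] := open_compact_subset oU U0.
pose K := fix K n := if n is m.+1 then g (m, K m) else K0.
have Kgood n : good (K n) by elim: n => [|n /(gP (n, K n))[]].
have [|||p Kp] := @nested_compact_bigcap_neq0 K.
- by move=> n; case: (Kgood n).
- by move=> n; case: (Kgood n) => _ [x /interior_subset Kx] _; exists x.
- by move=> n; case: (gP (n, K n) (Kgood n)).
have [n Pn Fnp] := UF p (K0U p (Kp 0%N)).
by case: (gP (n, K n) (Kgood n)) => _ _ /(_ Pn p (Kp n.+1)).
Qed.

End locally_compact_hausdorff.

Lemma open_subset_closure (X : topologicalType) (A O : set X) : open O ->
  (forall U, open U -> U !=set0 -> U `<=` O -> (U `&` A) !=set0) ->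
  O `<=` closure A.
Proof.
move=> oO meetA x Ox B Bx.
have [|||y [[_ /interior_subset By] Ay]] := meetA (O `&` B°).
- by apply: openI => //; exact: open_interior.
- by exists x; split => //; exact: nbhs_interior.
- by move=> y [].
by exists y.
Qed.

Lemma closure_squeeze (X : topologicalType) (A B : set X) :
  A `<=` B -> B `<=` closure A -> closure B = closure A.
Proof.
move=> AB BA; apply/seteqP; split; last exact: closureS.
by rewrite [X in _ `<=` X](closure_id _).1; [exact: closureS | exact: closed_closure].
Qed.

Lemma open_subset_bigcup_Fix_meets (X : topologicalType) (f : X -> X) (S : set nat)
    (U : set X) :
  hausdorff_space X -> locally_compact [set: X] -> continuous f ->
  S `<=` [set n | (0 < n)%N] -> open U -> U !=set0 ->
  U `<=` \bigcup_(s in S) Fix f s ->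
  (U `&` \bigcup_(p in PS S) (Per f p)°) !=set0.
Proof.
move=> hsX lcX cf Spos oU U0 UFix.
have cFix s : S s -> closed (Fix f s) by move=> _; exact: closed_Fix.
have [s Ss V0] := locally_compact_Baire hsX lcX oU U0 cFix UFix.
have oV : open (U `&` (Fix f s)°) by apply: openI => //; exact: open_interior.
have VFix : U `&` (Fix f s)° `<=` Fix f s by move=> y [_ /interior_subset].
have [q qs [y [[Uy _] qy]]] := open_Fix_meets_Per_interior hsX cf (Spos s Ss) oV V0 VFix.
have [q_gt0 _] := interior_subset qy.
by exists y; split => //; exists q => //; split => //; exists s.
Qed.

Theorem propositionA1 (X : topologicalType) (sigma : X -> X) (S : set nat) :
  hausdorff_space X ->
  locally_compact [set: X] ->
  homeomorphism sigma ->
  S `<=` [set n | (0 < n)%N] ->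
  S !=set0 ->
  let A := \bigcup_(p in PS S) (Per sigma p)° in
  let B := \bigcup_(s in S) (Fix sigma s)° in
  let C := (\bigcup_(s in S) Fix sigma s)° in
  let D := (\bigcup_(p in PS S) Per sigma p)° in
  [/\ A `<=` B, B `<=` C & C `<=` closure A] /\
  [/\ A `<=` D & D `<=` C] /\
  [/\ closure D = closure A, closure A = closure B & closure B = closure C].
Proof.
move=> hsX lcX [cs _] Spos _ A B C D.
have Per_sub_bigcup_Fix p : PS S p -> Per sigma p `<=` \bigcup_(s in S) Fix sigma s.
  by move=> [_ [s Ss ps]] x px; exists s => //; exact: Fix_dvdn ps _ (Per_sub_Fix px).
have AB : A `<=` B.
  move=> x [p [p_gt0 [s Ss ps]] px]; exists s => //.
  by apply: interiorS px => y py; exact: Fix_dvdn ps _ (Per_sub_Fix py).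
have BC : B `<=` C by move=> x [s Ss]; apply: interiorS => y sy; exists s.
have AD : A `<=` D by move=> x [p Pp]; apply: interiorS => y py; exists p.
have DC : D `<=` C by apply: interiorS => y [p Pp]; exact: Per_sub_bigcup_Fix.
have CA : C `<=` closure A.
  apply: open_subset_closure; first exact: open_interior.
  move=> U oU U0 UC.
  apply: open_subset_bigcup_Fix_meets => // y /UC; exact: interior_subset.
have clAC : closure C = closure A by apply: closure_squeeze => // x /AB /BC.
have clAB : closure B = closure A by apply: closure_squeeze => // x /BC /CA.
have clAD : closure D = closure A by apply: closure_squeeze => // x /DC /CA.
by split; [|split]; split => //; rewrite ?clAB ?clAC.
Qed.
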